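(* Let $m>n>0$ be relatively prime integers and $(r,s)\in\mathbb{Z}^2$. Then $(r,s)=\beta(m,n)$ if and only if $(s,\,r-2s)=\beta(2m+n,\,m)$.
   Context: For relatively prime integers $a>b>0$, $\beta(a,b)$ denotes the Bézout coefficients given by the Euclidean algorithm: with $a=q_1b+r_1$, $b=q_2r_1+r_2$, $\dots$, $r_{k-2}=q_kr_{k-1}+r_k$, $r_{k-1}=1$, $r_k=0$ ($r_{-1}=a$, $r_0=b$), write $\begin{pmatrix}a\\ b\end{pmatrix}=M\begin{pmatrix}1\\0\end{pmatrix}$ with $M=\prod_{i=1}^k\begin{pmatrix}q_i&1\\1&0\end{pmatrix}$; then $\beta(a,b)$ is the first row of $M^{-1}$, and $\beta(a,b)=(r,s)$ satisfies $ra+sb=1$. *)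

From HB Require Import structures.
From mathcomp Require Import all_boot all_order all_algebra.
Set Implicit Arguments. Unset Strict Implicit. Unset Printing Implicit Defensive.
Import Order.TTheory GRing.Theory Num.Theory.
Local Open Scope ring_scope.

(* Quotients q_1, ..., q_k of the Euclidean algorithm on (a, b):
   a = q_1 b + r_1, b = q_2 r_1 + r_2, ..., stopping when the remainder is 0.
   [fuel] bounds the number of steps; b.+1 steps always suffice since the
   second argument strictly decreases. *)
Fixpoint euclid_quots (fuel a b : nat) : seq nat :=
  match fuel with
  | 0 => [::]
  | fuel'.+1 => if b == 0%N then [::] else (a %/ b)%N :: euclid_quots fuel' b (a %% b)
  end.

Definition quotients (a b : nat) : seq nat := euclid_quots b.+1 a b.

Definition qmat (q : nat) : 'M[int]_2 :=
  \matrix_(i < 2, j < 2)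
    (if i == 0 :> nat then (if j == 0 :> nat then q%:Z else 1)
     else (if j == 0 :> nat then 1 else 0)).

Definition euclidM (a b : nat) : 'M[int]_2 := \prod_(q <- quotients a b) qmat q.

Definition beta (a b : nat) : int * int :=
  let Mi := invmx (euclidM a b) in (Mi 0 0, Mi 0 1).

(** Dividing [a] by [b] with quotient [q] and remainder [c] peels the factor
    [qmat q = [[q, 1], [1, 0]]] off the left of [euclidM a b], leaving
    [euclidM b c].  Hence [invmx (euclidM a b) = invmx (euclidM b c) *m Q] with
    [Q = [[0, 1], [1, -q]]], and comparing first rows gives the recurrence
    [beta a b = (s, r - q s)] where [(r, s) = beta b c].  For the pair [(2m + n, m)]
    the quotient is [2] and the remainder [n]. *)

From mathcomp Require Import all_boot all_order all_algebra.
Import GRing.Theory.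
Local Open Scope ring_scope.

Lemma mulmx1_invmx (R : comUnitRingType) (n : nat) (A B : 'M[R]_n) :
  A *m B = 1%:M -> invmx A = B.
Proof.
move=> AB; have [uA _] := mulmx1_unit AB.
by rewrite -[invmx A]mulmx1 -AB mulmxA mulVmx // mul1mx.
Qed.

Lemma invmxM (R : comUnitRingType) (n : nat) (A B : 'M[R]_n) :
  A \in unitmx -> B \in unitmx -> invmx (A *m B) = invmx B *m invmx A.
Proof.
move=> uA uB; apply: mulmx1_invmx.
by rewrite mulmxA -(mulmxA A) mulmxV // mulmx1 mulmxV.
Qed.

Lemma sum_ord2 (R : nmodType) (F : 'I_2 -> R) : \sum_(i < 2) F i = F 0 + F 1.
Proof. by rewrite big_ord_recl big_ord1; congr (_ + F _); apply: val_inj. Qed.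

Lemma euclid_quots_fuel (f g a b : nat) : (b < f)%N -> (b < g)%N ->
  euclid_quots f a b = euclid_quots g a b.
Proof.
elim: f g a b => [|f IH] [|g] a b //= ltbf ltbg.
have [//|b_gt0] := posnP b.
by congr (_ :: _); apply: IH; apply: leq_trans (ltn_pmod _ b_gt0) _.
Qed.

Lemma quotients_cons (a b : nat) : (0 < b)%N ->
  quotients a b = (a %/ b)%N :: quotients b (a %% b).
Proof.
move=> b_gt0; rewrite {1}/quotients /= eqn0Ngt b_gt0; congr (_ :: _).
exact: euclid_quots_fuel (ltn_pmod a b_gt0) (ltnSn _).
Qed.

Definition qmat_inv (q : nat) : 'M[int]_2 :=
  \matrix_(i < 2, j < 2)
    (if i == 0 :> nat then (if j == 0 :> nat then 0 else 1)
     else (if j == 0 :> nat then 1 else - q%:Z)).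

Lemma qmat_mulmx_inv (q : nat) : qmat q *m qmat_inv q = 1%:M.
Proof.
apply/matrixP => i j; rewrite !mxE sum_ord2 !mxE.
by case: i => [[|[|//]] ?]; case: j => [[|[|//]] ?] /=;
  rewrite ?(mulr0, mul0r, mulr1, mul1r, add0r, addr0, subrr).
Qed.

Lemma qmat_unit (q : nat) : qmat q \in unitmx.
Proof. by have [] := mulmx1_unit (qmat_mulmx_inv q). Qed.

Lemma invmx_qmat (q : nat) : invmx (qmat q) = qmat_inv q.
Proof. exact/mulmx1_invmx/qmat_mulmx_inv. Qed.

Lemma euclidM_unit (a b : nat) : euclidM a b \in unitmx.
Proof.
apply: (big_ind (fun A : 'M[int]_2 => A \in unitmx)) => [|A B uA uB|q _].
- exact: unitmx1.
- by rewrite unitmx_mul uA uB.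
- exact: qmat_unit.
Qed.

Lemma euclidM_cons (a b : nat) : (0 < b)%N ->
  euclidM a b = qmat (a %/ b) *m euclidM b (a %% b).
Proof. by move=> b_gt0; rewrite /euclidM quotients_cons // big_cons. Qed.

Lemma beta_cons (a b : nat) : (0 < b)%N ->
  beta a b = ((beta b (a %% b)).2,
              (beta b (a %% b)).1 - (a %/ b)%N%:Z * (beta b (a %% b)).2).
Proof.
move=> b_gt0; rewrite {1}/beta euclidM_cons // invmxM ?qmat_unit ?euclidM_unit //.
rewrite invmx_qmat !mxE !sum_ord2 !mxE /=.
by rewrite mulr0 add0r !mulr1 mulrN mulrC.
Qed.

Theorem lemma2p2 (m n : nat) (r s : int) :
  (0 < n)%N -> (n < m)%N -> coprime m n ->
  ((r, s) = beta m n <-> (s, r - 2 * s) = beta (2 * m + n)%N m).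
Proof.
move=> n_gt0 lt_nm _; have m_gt0 := ltn_trans n_gt0 lt_nm.
rewrite (beta_cons (2 * m + n)%N m m_gt0).
have -> : ((2 * m + n) %/ m = 2)%N by rewrite divnMDl // divn_small.
have -> : ((2 * m + n) %% m = n)%N by rewrite modnMDl modn_small.
case: (beta m n) => r' s' /=.
split=> [[-> ->] // | [-> /addIr ->] //].
Qed.
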